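(* There exists a countable abelian group $A$ of torsion-free rank $1$ such that $IAut(A)$ contains a subgroup $\Sigma\cong\prod_p\mathbb{Z}(p)$ with $\Sigma\cap FAut(A)=T(\Sigma)\cong\bigoplus_p\mathbb{Z}(p)$, where $p$ ranges over all primes.
   Context: Abelian groups are written additively. An automorphism $\varphi$ of $A$ is inertial if $(\varphi(X)+X)/X$ is finite for every subgroup $X\le A$; $IAut(A)$ is the subgroup of $\mathrm{Aut}(A)$ generated by the inertial automorphisms. $FAut(A)$ is the group of automorphisms acting as the identity on some subgroup of finite index of $A$. $T(\Sigma)$ denotes the set of elements of finite order of the abelian group $\Sigma$, and $\mathbb{Z}(p)$ is the cyclic group of order $p$. *)

From HB Require Import structures.
From mathcomp Require Import all_boot all_order all_algebra.
Set Implicit Arguments. Unset Strict Implicit. Unset Printing Implicit Defensive.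
Import GRing.Theory.
Local Open Scope ring_scope.

Section Defs.
Variable A : zmodType.

Definition countable_group : Prop := exists h : A -> nat, injective h.

Definition tf_rank1 : Prop :=
  exists a : A, (forall n : nat, (0 < n)%N -> a *+ n != 0) /\
    forall x : A, exists n m : int, n != 0 /\ x *~ n = a *~ m.

Definition is_subgroup (X : A -> Prop) : Prop :=
  X 0 /\ (forall x y, X x -> X y -> X (x - y)).

Definition is_aut (f : A -> A) : Prop :=
  (forall x y, f (x + y) = f x + f y) /\ bijective f.

(* (S + X)/X is finite, for S a set containing X-cosets representatives:
   finitely many cosets of X meet S *)
Definition finite_mod (S X : A -> Prop) : Prop :=
  exists l : seq A, forall y, S y -> exists2 z, z \in l & X (y - z).

Definition img_plus (phi : A -> A) (X : A -> Prop) : A -> Prop :=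
  fun y => exists x x', X x /\ X x' /\ y = phi x + x'.

Definition inertial (phi : A -> A) : Prop :=
  is_aut phi /\
  forall X, is_subgroup X -> finite_mod (img_plus phi X) X.

Inductive IAut_gen : (A -> A) -> Prop :=
| IA_id : IAut_gen id
| IA_mul phi g : inertial phi -> IAut_gen g -> IAut_gen (phi \o g)
| IA_mulV phi psi g : inertial phi -> cancel phi psi -> cancel psi phi ->
    IAut_gen g -> IAut_gen (psi \o g).

Definition in_IAut (f : A -> A) : Prop := exists2 g, IAut_gen g & g =1 f.

Definition in_FAut (f : A -> A) : Prop :=
  is_aut f /\ exists B : A -> Prop, is_subgroup B /\
    finite_mod (fun _ => True) B /\ forall b, B b -> f b = b.

End Defs.

Definition primes_t := {p : nat | prime p}.
Definition Pz := forall p : primes_t, 'Z_(sval p).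
Definition Pz_add (s t : Pz) : Pz := fun p => s p + t p.
Definition Pz_has_finite_order (s : Pz) : Prop :=
  exists2 n : nat, (0 < n)%N & forall p, s p *+ n = 0.
(* membership in the direct sum bigoplus_p Z(p) (finite support) *)
Definition Pz_fin_supp (s : Pz) : Prop :=
  exists N : nat, forall p : primes_t, (N < sval p)%N -> s p = 0.

(* Take A = Z (+) (+)_p Z/p^2.  An element s of prod_p Z(p) acts by fixing Z and
   multiplying the p-component by the unit 1 + s_p p of Z/p^2; this is an
   injective homomorphism into Aut(A).  Writing g = phi_s - 1, the Chinese
   remainder theorem shows that g maps each torsion element y to a multiple of y,
   so g preserves the torsion part of every subgroup X.  Modulo its torsion part,
   X is generated by one element x0 (its first coordinates form a cyclic group),
   hence g(X) lies in X + <g(x0)>, and g(x0) has finite order: phi_s is inertial.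
   Finally phi_s fixes a subgroup of finite index iff s has finite support: such
   a subgroup contains, up to finitely many cosets, the p-th unit vector for all
   large p, and phi_s fixes it only if s_p = 0; conversely, if s_p = 0 for p > N,
   phi_s fixes the elements whose components of index <= N vanish. *)

From HB Require Import structures.
From mathcomp Require Import all_boot all_order all_algebra zify ring.
From Stdlib Require Import Classical.
Set Implicit Arguments. Unset Strict Implicit. Unset Printing Implicit Defensive.
Import Order.TTheory GRing.Theory Num.Theory.
Local Open Scope ring_scope.

Lemma chinese_family (m c : nat -> nat) (N : nat) :
  (forall i j, i != j -> coprime (m i) (m j)) ->
  exists U, forall i, (i < N)%N -> U = c i %[mod m i].
Proof.
move=> co; elim: N => [|N [U hU]]; first by exists 0%N.
have coN : coprime (\prod_(i < N) m i) (m N).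
  elim/big_ind: _ => [|a b|i _]; first exact: coprime1n.
    by rewrite coprimeMl => -> ->.
  by apply: co; rewrite ltn_eqF.
exists (chinese (\prod_(i < N) m i) (m N) U (c N)) => i.
rewrite ltnS leq_eqVlt => /orP[/eqP ->|lt_iN].
  exact: chinese_modr.
have dv : (m i %| \prod_(j < N) m j)%N by rewrite (bigD1 (Ordinal lt_iN)) ?dvdn_mulr.
by rewrite -(modn_dvdm _ dv) chinese_modl // modn_dvdm // hU.
Qed.

Lemma modzBm m n d : ((m %% d)%Z - (n %% d)%Z = m - n %[mod d])%Z.
Proof. by rewrite modzDml -modzDmr modzNm modzDmr. Qed.

Definition modulus (i : nat) : nat := if prime i then (i * i)%N else 1.
Local Notation mz i := (modulus i)%:Z.

Lemma modulus_gt0 i : (0 < modulus i)%N.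
Proof. by rewrite /modulus; case: ifP => // /prime_gt0 p_gt0; rewrite muln_gt0 p_gt0. Qed.

Lemma mz_gt0 i : 0 < mz i.
Proof. by rewrite ltz_nat modulus_gt0. Qed.

Lemma modulus_prime p : prime p -> modulus p = (p * p)%N.
Proof. by rewrite /modulus => ->. Qed.

Lemma modulus_gt1 p : prime p -> (1 < modulus p)%N.
Proof. by move=> pp; rewrite modulus_prime //; have := prime_gt1 pp; nia. Qed.

Lemma coprime_modulus i j : i != j -> coprime (modulus i) (modulus j).
Proof.
rewrite /modulus; case: ifP => pi; case: ifP => pj // neq; rewrite ?coprime1n ?coprimen1 //.
by rewrite coprimeMl !coprimeMr prime_coprime // dvdn_prime2 // neq.
Qed.

Definition reduced (s : seq int) : bool :=
  all (fun i => 0 <= nth 0 s i < mz i) (iota 0 (size s)) && (last 1 s != 0).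

Fixpoint trim0 (s : seq int) : seq int :=
  if s is x :: s' then
    let t := trim0 s' in if (t == [::]) && (x == 0) then [::] else x :: t
  else [::].

Lemma nth_trim0 s i : nth 0 (trim0 s) i = nth 0 s i.
Proof.
elim: s i => [|x s IH] i //=.
case: (trim0 s =P [::]) IH => [e|_] IH /=; case: (x =P 0) => [x0|_] /=;
  by case: i => [|i] //=; rewrite -IH ?e ?x0 //= nth_nil.
Qed.

Lemma last_trim0 s : last 1 (trim0 s) != 0.
Proof.
elim: s => [|x s IH] //=.
by case: (trim0 s) IH => [|y t] //= _; case: (x =P 0) => [|/eqP].
Qed.

Lemma reduced_trim0 s : (forall i, 0 <= nth 0 s i < mz i) -> reduced (trim0 s).
Proof. by move=> h; rewrite /reduced last_trim0 andbT; apply/allP => i _; rewrite nth_trim0. Qed.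

(* The direct sum of the Z/(modulus i), i.e. of the Z/p^2 (non-prime indices
   carry the trivial group), stored as the sequence of canonical residues
   without trailing zeros, so that equality is structural. *)
Record tors := Tors { tval : seq int; tvalP : reduced tval }.
HB.instance Definition _ := [isSub for tval].
HB.instance Definition _ := [Countable of tors by <:].

Definition coord (t : tors) (i : nat) : int := nth 0 (tval t) i.

Lemma coord_range t i : 0 <= coord t i < mz i.
Proof.
rewrite /coord; case: t => s /= /andP[/allP s_red _].
case: (ltnP i (size s)) => hi; first by apply: s_red; rewrite mem_iota.
by rewrite nth_default // lexx mz_gt0.
Qed.

Lemma modz_coord t i : (coord t i %% mz i)%Z = coord t i.
Proof. by rewrite modz_small // coord_range. Qed.

Lemma coord_default t i : (size (tval t) <= i)%N -> coord t i = 0.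
Proof. exact: nth_default. Qed.

Lemma size_le_nth_eq (s t : seq int) : last 1 t != 0 ->
  (forall i, nth 0 s i = nth 0 t i) -> (size t <= size s)%N.
Proof.
case/lastP: t => [|t a] //; rewrite last_rcons size_rcons => a0 st.
rewrite leqNgt; apply/negP => lt_st.
move: (st (size t)); rewrite nth_rcons ltnn eqxx nth_default // => a0'.
by rewrite -a0' eqxx in a0.
Qed.

Lemma coord_inj x y : (forall i, coord x i = coord y i) -> x = y.
Proof.
move=> xy; apply: val_inj; rewrite /coord in xy.
have [/andP[_ lx] /andP[_ ly]] := (tvalP x, tvalP y).
have e : size (tval x) = size (tval y) by apply/eqP; rewrite eqn_leq !size_le_nth_eq.
by apply: (eq_from_nth (x0 := 0)) e _ => i _; rewrite xy.
Qed.

Definition tors_of (f : nat -> int) (n : nat) : tors.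
Proof.
refine (@Tors (trim0 (mkseq (fun i => f i %% mz i)%Z n)) _).
apply: reduced_trim0 => i; case: (ltnP i n) => hi.
  by rewrite nth_mkseq // modz_ge0 ?ltz_pmod ?mz_gt0 // gt_eqF ?mz_gt0.
by rewrite nth_default ?size_mkseq // lexx mz_gt0.
Defined.

Lemma coord_tors_of f n i :
  coord (tors_of f n) i = if (i < n)%N then (f i %% mz i)%Z else 0.
Proof.
rewrite /coord /= nth_trim0; case: ltnP => hi; first by rewrite nth_mkseq.
by rewrite nth_default ?size_mkseq.
Qed.

Definition zero_tors := tors_of (fun _ => 0) 0.
Definition add_tors x y :=
  tors_of (fun i => coord x i + coord y i) (maxn (size (tval x)) (size (tval y))).
Definition opp_tors x := tors_of (fun i => - coord x i) (size (tval x)).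

Lemma coord_add_tors x y i : coord (add_tors x y) i = ((coord x i + coord y i) %% mz i)%Z.
Proof.
rewrite coord_tors_of; case: ltnP => //; rewrite geq_max => /andP[hx hy].
by rewrite !coord_default // addr0 mod0z.
Qed.

Lemma coord_opp_tors x i : coord (opp_tors x) i = ((- coord x i) %% mz i)%Z.
Proof. by rewrite coord_tors_of; case: ltnP => // h; rewrite coord_default // oppr0 mod0z. Qed.

Lemma add_torsA : associative add_tors.
Proof.
by move=> x y z; apply: coord_inj => i; rewrite !coord_add_tors modzDml modzDmr addrA.
Qed.

Lemma add_torsC : commutative add_tors.
Proof. by move=> x y; apply: coord_inj => i; rewrite !coord_add_tors addrC. Qed.

Lemma add0_tors : left_id zero_tors add_tors.
Proof.
by move=> x; apply: coord_inj => i; rewrite coord_add_tors coord_tors_of add0r modz_coord.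
Qed.

Lemma addN_tors : left_inverse zero_tors opp_tors add_tors.
Proof.
move=> x; apply: coord_inj => i.
by rewrite coord_add_tors coord_opp_tors coord_tors_of modzDml addNr mod0z.
Qed.

HB.instance Definition _ := GRing.isZmodule.Build tors add_torsA add_torsC add0_tors addN_tors.

Lemma coord0 i : coord 0 i = 0.
Proof. by rewrite coord_tors_of. Qed.

Lemma coordD (x y : tors) i : coord (x + y) i = ((coord x i + coord y i) %% mz i)%Z.
Proof. exact: coord_add_tors. Qed.

Lemma coordB (x y : tors) i : coord (x - y) i = ((coord x i - coord y i) %% mz i)%Z.
Proof. by rewrite coordD coord_opp_tors modzDmr. Qed.

Lemma coordMn (x : tors) n i : coord (x *+ n) i = ((coord x i * n%:Z) %% mz i)%Z.
Proof.
elim: n => [|n IH]; first by rewrite mulr0n coord0 mulr0 mod0z.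
by rewrite mulrS coordD IH modzDmr -[in RHS]addn1 PoszD mulrDr mulr1 addrC.
Qed.

Lemma tors_torsion (t : tors) : t *+ \prod_(i < size (tval t)) modulus i = 0.
Proof.
apply: coord_inj => i; rewrite coordMn coord0.
case: (ltnP i (size (tval t))) => hi; last by rewrite coord_default // mul0r mod0z.
apply/dvdz_mod0P; apply: dvdz_mull; rewrite dvdzE /=.
by rewrite (bigD1 (Ordinal hi)) //= dvdn_mulr.
Qed.

Section PrimeResidues.
Variable p : primes_t.
Let p_gt1 : (1 < sval p)%N := prime_gt1 (svalP p).

Lemma val_Zp_lt (x : 'Z_(sval p)) : (val x < sval p)%N.
Proof. by have := ltn_ord x; rewrite [X in (_ < X)%N -> _]Zp_cast. Qed.

Lemma val_ZpD (x y : 'Z_(sval p)) : val (x + y) = ((val x + val y) %% sval p)%N.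
Proof. by congr (_ %% _)%N; rewrite Zp_cast. Qed.

Lemma val_ZpMn (x : 'Z_(sval p)) n : val (x *+ n) = ((val x * n) %% sval p)%N.
Proof. by rewrite Zp_mulrn; congr (_ %% _)%N; rewrite Zp_cast. Qed.

End PrimeResidues.

Lemma Pz_finite_orderP s : Pz_has_finite_order s <-> Pz_fin_supp s.
Proof.
split=> [[n n_gt0 sn0]|[N sN]].
  exists n => p lt_np; apply: val_inj => /=.
  have /eqP := congr1 val (sn0 p); rewrite val_ZpMn -/(dvdn _ _) Gauss_dvdl.
    case: (posnP (val (s p))) => // sp_gt0 /(dvdn_leq sp_gt0).
    by rewrite leqNgt val_Zp_lt.
  rewrite prime_coprime ?(svalP p) //.
  by apply: contraL lt_np => /(dvdn_leq n_gt0); rewrite leqNgt.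
exists N`!; first exact: fact_gt0.
move=> p; case: (ltnP N (sval p)) => le_pN; first by rewrite sN // mul0rn.
apply: val_inj; rewrite val_ZpMn /=; apply/eqP.
by rewrite -/(dvdn _ _) dvdn_mull // dvdn_fact // prime_gt0 ?(svalP p).
Qed.

Definition Pz_nat (s : Pz) (i : nat) : nat :=
  if (insub i : option primes_t) is Some p then val (s p) else 0.

Definition unit_mult (s : Pz) (i : nat) : nat := 1 + Pz_nat s i * i.

Lemma Pz_nat_val s p : Pz_nat s (sval p) = val (s p).
Proof. by rewrite /Pz_nat valK. Qed.

Lemma unit_mult_lt s p : prime p -> (unit_mult s p < modulus p)%N.
Proof.
move=> pp; rewrite /unit_mult modulus_prime //.
have lt_sp : (Pz_nat s p < p)%N by rewrite (Pz_nat_val s (exist _ p pp)) val_Zp_lt.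
by have := prime_gt1 pp; nia.
Qed.

Lemma unit_mult_add s t i :
  unit_mult (Pz_add s t) i = unit_mult t i * unit_mult s i %[mod modulus i].
Proof.
rewrite /modulus; case: ifP => pi; last by rewrite !modn1.
rewrite /unit_mult /Pz_nat insubT /Pz_add val_ZpD /=.
move: (nat_of_ord _) (nat_of_ord _) => x y /=.
have := divn_eq (y + x) i; move: (_ %/ i)%N (_ %% i)%N => q r e.
have -> : ((1 + x * i) * (1 + y * i) = (q + x * y) * (i * i) + (1 + r * i))%N.
  have -> : ((1 + x * i) * (1 + y * i) = 1 + (y + x) * i + x * y * (i * i))%N by ring.
  by rewrite e; ring.
by rewrite modnMDl.
Qed.

Lemma unit_mult_inj s t p : unit_mult s (sval p) = unit_mult t (sval p) -> s p = t p.
Proof.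
rewrite /unit_mult !Pz_nat_val => /eqP; rewrite eqn_add2l eqn_mul2r.
by rewrite gtn_eqF ?prime_gt0 ?(svalP p) //= => /eqP /val_inj.
Qed.

Definition act (s : Pz) (t : tors) : tors :=
  tors_of (fun i => coord t i * (unit_mult s i)%:Z) (size (tval t)).

Lemma coord_act s t i : coord (act s t) i = ((coord t i * (unit_mult s i)%:Z) %% mz i)%Z.
Proof. by rewrite coord_tors_of; case: ltnP => // h; rewrite coord_default // mul0r mod0z. Qed.

Lemma act_is_zmod_morphism s : zmod_morphism (act s).
Proof.
move=> x y; apply: coord_inj => i.
by rewrite coordB !coord_act coordB modzMml modzBm mulrBl.
Qed.

HB.instance Definition _ s :=
  GRing.isZmodMorphism.Build tors tors (act s) (act_is_zmod_morphism s).

Lemma act_comp s t x : act (Pz_add s t) x = act s (act t x).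
Proof.
apply: coord_inj => i; rewrite !coord_act modzMml -mulrA.
rewrite -[LHS]modzMmr -[RHS]modzMmr; congr ((_ * _) %% _)%Z.
by rewrite -PoszM !modz_nat unit_mult_add.
Qed.

Lemma act_ext s t : (forall p, s p = t p) -> act s =1 act t.
Proof.
move=> st x; apply: coord_inj => i; rewrite !coord_act /unit_mult /Pz_nat.
by case: insub => // p; rewrite st.
Qed.

Lemma act0 (x : tors) : act (fun _ => 0) x = x.
Proof.
apply: coord_inj => i; rewrite coord_act /unit_mult /Pz_nat.
by case: insub => [p|]; rewrite /= mulr1 modz_coord.
Qed.

Definition Pz_opp (s : Pz) : Pz := fun p => - s p.

Lemma actK s : cancel (act s) (act (Pz_opp s)).
Proof.
move=> x; rewrite -act_comp (act_ext (t := fun _ => 0)) ?act0 // => p.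
by rewrite /Pz_add addNr.
Qed.

Lemma actKV s : cancel (act (Pz_opp s)) (act s).
Proof.
move=> x; rewrite -act_comp (act_ext (t := fun _ => 0)) ?act0 // => p.
by rewrite /Pz_add addrN.
Qed.

Lemma coord_act_unit s u p :
  prime p -> coord u p = 1 -> coord (act s u) p = (unit_mult s p)%:Z.
Proof. by move=> pp up; rewrite coord_act up mul1r modz_nat modn_small ?unit_mult_lt. Qed.

Lemma act_subr_mulrn s y : exists U : nat, act s y - y = y *+ U.
Proof.
have [U hU] := chinese_family (fun i => Pz_nat s i * i)%N (size (tval y)) coprime_modulus.
exists U; apply: coord_inj => i; rewrite coordB coord_act coordMn modzDml.
case: (ltnP i (size (tval y))) => hi; last by rewrite coord_default // !mul0r subr0 mod0z.
rewrite /unit_mult PoszD mulrDr mulr1 addrAC subrr add0r.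
by rewrite -modzMmr -[RHS]modzMmr !modz_nat (hU i hi).
Qed.

Definition grp := (int * tors)%type.

Definition phi (s : Pz) (x : grp) : grp := (x.1, act s x.2).

Lemma phi_is_zmod_morphism s : zmod_morphism (phi s).
Proof. by move=> x y; rewrite /phi /= raddfB. Qed.

HB.instance Definition _ s :=
  GRing.isZmodMorphism.Build grp grp (phi s) (phi_is_zmod_morphism s).

Lemma phi_aut s : is_aut (phi s).
Proof.
split; first exact: raddfD.
by exists (phi (Pz_opp s)) => x; rewrite /phi /= ?actK ?actKV -surjective_pairing.
Qed.

Lemma phi_add s t x : phi (Pz_add s t) x = phi s (phi t x).
Proof. by rewrite /phi /= act_comp. Qed.

Definition basis_tors (p : nat) : tors := tors_of (fun i => (i == p : nat)%:Z) p.+1.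

Lemma coord_basis_tors p : prime p -> coord (basis_tors p) p = 1.
Proof. by move=> pp; rewrite coord_tors_of ltnSn eqxx modz_nat modn_small ?modulus_gt1. Qed.

Lemma phi_inj s t : phi s =1 phi t -> forall p, s p = t p.
Proof.
move=> st p; apply: unit_mult_inj; have pp := svalP p.
have /(congr1 (coord^~ (sval p))) := congr1 snd (st (0, basis_tors (sval p))).
by rewrite /= !coord_act_unit ?coord_basis_tors // => /eqP; rewrite eqz_nat => /eqP.
Qed.

Lemma countable_grp : countable_group grp.
Proof. by exists pickle; apply: pcan_inj pickleK. Qed.

Lemma tf_rank1_grp : tf_rank1 grp.
Proof.
exists (1, 0); split=> [n n_gt0|[n t]].
  apply: contraTneq n_gt0 => /(congr1 fst); rewrite raddfMn /= => /eqP.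
  by rewrite pnatr_eq0 => /eqP ->.
pose D := \prod_(i < size (tval t)) modulus i.
exists D%:Z, (n * D%:Z); split.
  by rewrite eqz_nat -lt0n prodn_gt0 // => i; exact: modulus_gt0.
rewrite [LHS]surjective_pairing [RHS]surjective_pairing !raddfMz /= mul0rz mulrzz.
by rewrite -pmulrn tors_torsion intz.
Qed.

Lemma coord_trunc_finite N : exists l : seq tors, forall t,
  exists2 u, u \in l & forall i, (i <= N)%N -> coord u i = coord t i.
Proof.
pose emb (g : {ffun 'I_N.+1 -> 'I_(N * N).+1}) :=
  tors_of (fun i => (g (inord i) : nat)%:Z) N.+1.
exists [seq emb g | g <- enum {ffun 'I_N.+1 -> 'I_(N * N).+1}] => t.
exists (emb [ffun j : 'I_N.+1 => inord `|coord t j|%N]); first by rewrite map_f ?mem_enum.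
move=> i le_iN; rewrite coord_tors_of ltnS le_iN ffunE (@inordK N i) ?ltnS //.
have /andP[t_ge0 t_lt] := coord_range t i.
rewrite inordK ?gez0_abs ?modz_coord // -ltz_nat gez0_abs //.
apply: lt_le_trans t_lt _; rewrite lez_nat /modulus; case: ifP => // _; exact/leqW/leq_mul.
Qed.

Lemma unit_mult_supp s N i :
  (forall p : primes_t, (N < sval p)%N -> s p = 0) -> (N < i)%N -> unit_mult s i = 1%N.
Proof.
move=> sN lt_Ni; rewrite /unit_mult /Pz_nat.
by case: insubP => [p _ ip|//]; rewrite sN ?ip.
Qed.

Lemma FAut_fin_supp s : in_FAut (phi s) -> Pz_fin_supp s.
Proof.
move=> [_ [B [_ [[l lB] B_fix]]]].
exists (\max_(z <- l) size (tval z.2)) => p lt_lp; have pp := svalP p.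
have [z zl Bz] := lB ((0, basis_tors (sval p)) : grp) I.
have z_p : coord z.2 (sval p) = 0.
  apply/coord_default/(leq_trans _ (ltnW lt_lp)).
  exact: (leq_bigmax_seq (P := xpredT) (F := fun z : grp => size (tval z.2)) z zl).
have u_p : coord (basis_tors (sval p) - z.2) (sval p) = 1.
  by rewrite coordB coord_basis_tors // z_p subr0 modz_nat modn_small ?modulus_gt1.
apply: (@unit_mult_inj s (fun _ => 0)).
rewrite (@unit_mult_supp (fun _ => 0) 0) ?prime_gt0 //.
have /(congr1 (coord^~ (sval p))) := congr1 snd (B_fix _ Bz).
by rewrite /= coord_act_unit // u_p => /eqP; rewrite eqz_nat => /eqP.
Qed.

Lemma fin_supp_FAut s : Pz_fin_supp s -> in_FAut (phi s).
Proof.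
move=> [N sN]; split; first exact: phi_aut.
exists (fun x : grp => forall i, (i <= N)%N -> coord x.2 i = 0); split; [split|split].
- by move=> i _; rewrite coord0.
- by move=> x y x0 y0 i le_iN; rewrite coordB x0 ?y0 // subr0 mod0z.
- have [l lN] := coord_trunc_finite N.
  exists [seq ((0, u) : grp) | u <- l] => -[n t] _.
  have [u ul ut] := lN t; exists (0, u); first exact: map_f.
  by move=> i le_iN; rewrite /= coordB ut // subrr mod0z.
- move=> [n t] t0; congr pair; apply: coord_inj => i; rewrite coord_act.
  have [le_iN|lt_Ni] := leqP i N; first by rewrite t0 // mul0r mod0z.
  by rewrite (unit_mult_supp sN lt_Ni) mulr1 modz_coord.
Qed.

Section Subgroups.
Variables (V : zmodType) (X : V -> Prop).
Hypothesis X_sub : is_subgroup X.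

Lemma subgroup0 : X 0.
Proof. by case: X_sub. Qed.

Lemma subgroupB x y : X x -> X y -> X (x - y).
Proof. by case: X_sub => _; apply. Qed.

Lemma subgroupN x : X x -> X (- x).
Proof. by move=> Xx; have := subgroupB subgroup0 Xx; rewrite sub0r. Qed.

Lemma subgroupD x y : X x -> X y -> X (x + y).
Proof. by move=> Xx /subgroupN XNy; rewrite -[y]opprK; apply: subgroupB. Qed.

Lemma subgroupMz x z : X x -> X (x *~ z).
Proof.
move=> Xx; have Xn n : X (x *+ n).
  by elim: n => [|n IHn]; [rewrite mulr0n; apply: subgroup0 | rewrite mulrS; apply: subgroupD].
by case: z => n; rewrite ?NegzE ?mulrNz -pmulrn //; apply: subgroupN.
Qed.

End Subgroups.

Lemma ex_least (P : nat -> Prop) :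
  (exists n, P n) -> exists n, P n /\ forall m, P m -> (n <= m)%N.
Proof.
move=> [n Pn]; elim/ltn_ind: n Pn => n IHn Pn.
have [[m [Pm lt_mn]]|no_less] := classic (exists m, P m /\ (m < n)%N).
  exact: IHn lt_mn Pm.
by exists n; split=> // m Pm; rewrite leqNgt; apply/negP => lt_mn; apply: no_less; exists m.
Qed.

(* [x0] is an element of [X] of least positive first coordinate, if any. *)
Lemma subgroup_fst_cyclic (V : zmodType) (X : int * V -> Prop) : is_subgroup X ->
  exists2 x0, X x0 & forall x, X x -> exists q, (x - x0 *~ q).1 = 0.
Proof.
move=> X_sub.
have [[x1 [Xx1 x1_nz]]|fst0] := classic (exists x, X x /\ x.1 != 0); last first.
  exists 0 => [|x Xx]; first exact: (subgroup0 X_sub).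
  by exists 0; rewrite mulr0z subr0; apply/eqP/negPn/negP => x_nz; apply: fst0; exists x.
pose P n := (0 < n)%N /\ exists x, X x /\ x.1 = n%:Z.
have [n0 [[n0_gt0 [x0 [Xx0 x0_n0]]] n0_min]] : exists n, P n /\ forall m, P m -> (n <= m)%N.
  apply: ex_least; exists `|x1.1|%N; split; first by rewrite absz_gt0.
  have [x1_ge0|x1_lt0] := leP 0 x1.1; first by exists x1; rewrite gez0_abs.
  by exists (- x1); split; [exact: (subgroupN X_sub) | rewrite ltz0_abs].
exists x0 => // x Xx; exists (x.1 %/ n0)%Z; set y := x - x0 *~ _.
have Xy : X y by apply: (subgroupB X_sub); last exact: (subgroupMz X_sub).
have y1 : y.1 = (x.1 %% n0)%Z.
  by rewrite raddfB raddfMz /= x0_n0 mulrzz mulrC {1}(divz_eq x.1 n0) addrAC subrr add0r.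
have n0_nz : n0%:Z != 0 by rewrite eqz_nat -lt0n.
have y1_ge0 : 0 <= y.1 by rewrite y1 modz_ge0.
apply/eqP/negPn/negP => y1_nz; have /n0_min : P `|y.1|%N.
  by split; [rewrite absz_gt0 | exists y; rewrite gez0_abs].
by rewrite -lez_nat gez0_abs // y1 leNgt ltz_pmod.
Qed.

Lemma phi_subr_tors s y : exists U : nat, phi s (0, y) - (0, y) = (0, y) *+ U.
Proof.
have [U hU] := act_subr_mulrn s y; exists U.
by rewrite [RHS]surjective_pairing raddfMn /= raddfMn /= mul0rn -hU.
Qed.

Lemma phi_inertial s : inertial (phi s).
Proof.
split=> [|X X_sub]; first exact: phi_aut.
pose g x := phi s x - x.
have g_tors y : X (0, y) -> X (g (0, y)).
  rewrite /g; have [U ->] := phi_subr_tors s y.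
  by rewrite pmulrn; apply: (subgroupMz X_sub).
have [x0 Xx0 x0_gen] := subgroup_fst_cyclic X_sub.
pose w := g x0; pose D := \prod_(i < size (tval w.2)) modulus i.
have D_gt0 : (0 < D)%N by rewrite prodn_gt0 // => i; exact: modulus_gt0.
have wD : w *+ D = 0.
  by rewrite [LHS]surjective_pairing !raddfMn /= subrr mul0rn tors_torsion.
exists [seq w *+ k | k <- iota 0 D] => _ [x [x' [Xx [Xx' ->]]]].
have [q x_q] := x0_gen x Xx; set y := x - x0 *~ q in x_q.
have y_def : y = (0, y.2) by rewrite [LHS]surjective_pairing x_q.
have Xy : X y by apply: (subgroupB X_sub); last exact: (subgroupMz X_sub).
have wq : w *~ q = w *+ `|(q %% D)%Z|%N.
  rewrite {1}(divz_eq q D) mulrzDr -mulrzA_C -pmulrn wD mul0rz add0r.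
  by rewrite pmulrn gez0_abs // modz_ge0 // eqz_nat -lt0n.
exists (w *+ `|(q %% D)%Z|%N).
  rewrite map_f // mem_iota add0n -ltz_nat gez0_abs ?modz_ge0 ?ltz_pmod //.
  by rewrite eqz_nat -lt0n.
have -> : phi s x + x' - w *+ `|(q %% D)%Z|%N = g y + (x + x').
  rewrite -wq /w /g.
  have -> : phi s y = phi s x - phi s x0 *~ q by rewrite raddfB raddfMz.
  rewrite /y mulrzBl; move: (phi s x) (phi s x0 *~ q) (x0 *~ q) => a b c.
  by rewrite !opprB !addrA subrK [LHS]addrAC [a + x' - b]addrAC [RHS]addrAC.
apply: (subgroupD X_sub); last exact: (subgroupD X_sub).
by rewrite y_def; apply: g_tors; rewrite -y_def.
Qed.

Theorem propositionA :
  exists A : zmodType, countable_group A /\ tf_rank1 A /\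
  exists f : Pz -> A -> A,
    (forall s, is_aut (f s)) /\
    (forall s t x, f (Pz_add s t) x = f s (f t x)) /\
    (forall s t, f s =1 f t -> forall p, s p = t p) /\
    (forall s, in_IAut (f s)) /\
    (forall s, in_FAut (f s) <-> Pz_has_finite_order s) /\
    (forall s, Pz_has_finite_order s <-> Pz_fin_supp s).
Proof.
exists grp; split; first exact: countable_grp.
split; first exact: tf_rank1_grp.
exists phi; split; first exact: phi_aut.
split; first exact: phi_add.
split; first exact: phi_inj.
split=> [s|]; last split=> [s|]; last exact: Pz_finite_orderP.
- by exists (phi s \o id) => //; apply: IA_mul (phi_inertial s) (IA_id _).
- rewrite Pz_finite_orderP.
  by split; [exact: FAut_fin_supp | exact: fin_supp_FAut].
Qed.
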